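(* Let $A$ be a ring, $\varpi\in A$ a non-zero-divisor, and $H\in A$ an element whose image in $A/\varpi$ is a non-zero-divisor. Endow $A$ with the $\varpi$-adic topology and let $A\langle X\rangle$ be the ring of restricted power series. Then the map $$\varphi:A\langle X\rangle/(XH-\varpi)\to A\langle X\rangle/(XH-1),\qquad X\mapsto\varpi X,$$ is injective.
   Context: $A\langle X\rangle=\{\sum_{n\ge0}a_nX^n: a_n\in A,\ \text{for every }k\text{ one has }a_n\in\varpi^kA\text{ for all sufficiently large }n\}$. *)

From HB Require Import structures.
From mathcomp Require Import all_boot all_order all_algebra.
Set Implicit Arguments. Unset Strict Implicit. Unset Printing Implicit Defensive.
Import GRing.Theory.
Local Open Scope ring_scope.

(* Formal power series over A, as coefficient sequences: f n = coefficient of X^n. *)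
Definition pseries (A : comPzRingType) := nat -> A.

Definition restricted (A : comPzRingType) (w : A) (f : pseries A) : Prop :=
  forall k : nat, exists N : nat, forall n : nat, (N <= n)%N ->
    exists b : A, f n = w ^+ k * b.

Definition psmul (A : comPzRingType) (f g : pseries A) : pseries A :=
  fun n => \sum_(i < n.+1) f i * g (n - i)%N.

Definition pssub (A : comPzRingType) (f g : pseries A) : pseries A :=
  fun n => f n - g n.

Definition XH_minus (A : comPzRingType) (H c : A) : pseries A :=
  fun n => if n == 0%N then - c else if n == 1%N then H else 0.

Definition in_ideal1 (A : comPzRingType) (w : A) (p f : pseries A) : Prop :=
  exists g : pseries A, restricted w g /\ f = psmul p g.

(* Substitution X |-> c X : coefficients a_n c^n. *)
Definition subst_scale (A : comPzRingType) (c : A) (f : pseries A) : pseries A :=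
  fun n => f n * c ^+ n.

From HB Require Import structures.
From mathcomp Require Import all_boot all_order all_algebra.
From mathcomp Require Import ring.
From Stdlib Require Import ClassicalEpsilon FunctionalExtensionality.
Set Implicit Arguments. Unset Strict Implicit.
Import GRing.Theory.
Local Open Scope ring_scope.

(* Write a = f1 - f2 and a(wX) = (XH - 1) g.  Comparing coefficients gives
   H g_m - g_(m+1) = w^(m+1) a_(m+1); since H is a non-zero-divisor modulo every
   power of w, a descending induction from the w-adically small tail of g shows
   w^(n+1) | g_n.  Then h_n := g_n / w^(n+1) satisfies a = (XH - w) h, and h is
   restricted because H^k h_n = w^k h_(n+k) modulo the w^k-divisible
   coefficients of a. *)

Section WadicDivisibility.
Variables (A : comPzRingType) (w : A).

Definition wdvd (k : nat) (x : A) : Prop := exists b, x = w ^+ k * b.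

Lemma wdvd0 k : wdvd k 0.
Proof. by exists 0; rewrite mulr0. Qed.

Lemma wdvdD k x y : wdvd k x -> wdvd k y -> wdvd k (x + y).
Proof. by move=> [b ->] [c ->]; exists (b + c); rewrite mulrDr. Qed.

Lemma wdvdB k x y : wdvd k x -> wdvd k y -> wdvd k (x - y).
Proof. by move=> [b ->] [c ->]; exists (b - c); rewrite mulrBr. Qed.

Lemma wdvdMl k x y : wdvd k x -> wdvd k (y * x).
Proof. by move=> [b ->]; exists (y * b); ring. Qed.

Lemma wdvd_expM k j x : (k <= j)%N -> wdvd k (w ^+ j * x).
Proof.
by move=> le_kj; exists (w ^+ (j - k) * x); rewrite mulrA -exprD subnKC.
Qed.

Lemma restricted_sub f g :
  restricted w f -> restricted w g -> restricted w (pssub f g).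
Proof.
move=> hf hg k; have [N1 h1] := hf k; have [N2 h2] := hg k.
exists (maxn N1 N2) => n; rewrite geq_max => /andP[le1 le2].
exact: wdvdB (h1 n le1) (h2 n le2).
Qed.

End WadicDivisibility.

Section MulXHMinus.
Variables (A : comPzRingType) (H c : A) (g : pseries A).

Lemma psmul_XH_minus0 : psmul (XH_minus H c) g 0 = - c * g 0%N.
Proof. by rewrite /psmul big_ord_recl big_ord0 addr0. Qed.

Lemma psmul_XH_minusS m :
  psmul (XH_minus H c) g m.+1 = - c * g m.+1 + H * g m.
Proof.
rewrite /psmul 2!big_ord_recl big1 ?addr0 ?subn1 //.
by move=> i _; rewrite /XH_minus mul0r.
Qed.

End MulXHMinus.

Section HRegularModW.
Variables (A : comPzRingType) (w H : A).
Hypothesis hw : forall a : A, w * a = 0 -> a = 0.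
Hypothesis hH :
  forall a : A, (exists b : A, H * a = w * b) -> exists c : A, a = w * c.

Lemma lreg_w : GRing.lreg w.
Proof.
move=> x y e; apply/eqP; rewrite -subr_eq0; apply/eqP/hw.
by rewrite mulrBr e subrr.
Qed.

(* From H a = w^(k+1) b, hH gives a = w c, and cancelling the regular w
   leaves H c = w^k b, so the induction hypothesis applies to c. *)
Lemma wdvd_cancelH k a : wdvd w k (H * a) -> wdvd w k a.
Proof.
elim: k a => [|k IH] a; first by exists a; rewrite expr0 mul1r.
move=> [b hb].
have [c ac] : exists c, a = w * c.
  by apply: hH; exists (w ^+ k * b); rewrite hb exprS mulrA.
have /IH [d cd] : wdvd w k (H * c).
  exists b; apply: lreg_w.
  by rewrite mulrCA -ac hb exprS mulrA.
by exists d; rewrite ac cd exprS mulrA.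
Qed.

Lemma wdvd_cancelHX k m a : wdvd w k (H ^+ m * a) -> wdvd w k a.
Proof.
elim: m => [|m IH]; first by rewrite expr0 mul1r.
by move=> hm; apply/IH/wdvd_cancelH; rewrite mulrA -exprS.
Qed.

Lemma wdvd_descent k n (g : pseries A) :
  restricted w g -> (forall m, (n <= m)%N -> wdvd w k (H * g m - g m.+1)) ->
  wdvd w k (g n).
Proof.
move=> /(_ k) [N hN] step.
suff tail d m : (n <= m)%N -> (N <= m + d)%N -> wdvd w k (g m).
  by apply: (tail N n) => //; rewrite leq_addl.
elim: d m => [|d IH] m le_nm; first by rewrite addn0; apply: hN.
rewrite addnS -addSn => le_N; apply: wdvd_cancelH.
rewrite -[H * g m](subrK (g m.+1)).
by apply: wdvdD; [apply: step | apply: IH; rewrite // ltnW].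
Qed.

(* The w^k-part of a telescopes: H^m h_n - w^m h_(n+m) is a combination of
   a_(n+1), ..., a_(n+m). *)
Lemma restricted_of_recurrence (a h : pseries A) :
  restricted w a -> (forall m, a m.+1 = - w * h m.+1 + H * h m) ->
  restricted w h.
Proof.
move=> ha rec k; have [N hN] := ha k.
exists N => n le_Nn.
have telescope m : wdvd w k (H ^+ m * h n - w ^+ m * h (n + m)%N).
  elim: m => [|m IH]; first by rewrite !expr0 !mul1r addn0 subrr; apply: wdvd0.
  have -> : H ^+ m.+1 * h n - w ^+ m.+1 * h (n + m.+1)%N =
    H * (H ^+ m * h n - w ^+ m * h (n + m)%N) + w ^+ m * a (n + m).+1.
    by rewrite rec addnS !exprS; ring.
  apply: wdvdD; first exact: wdvdMl.
  by apply/wdvdMl/hN; rewrite (leq_trans le_Nn) // -addnS leq_addr.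
apply: (@wdvd_cancelHX k k).
rewrite -[H ^+ k * h n](subrK (w ^+ k * h (n + k)%N)).
exact: wdvdD (wdvd_expM _ _ _).
Qed.

End HRegularModW.

Theorem mainTheorem17 (A : comPzRingType) (w H : A)
  (hw : forall a : A, w * a = 0 -> a = 0)
  (hH : forall a : A, (exists b : A, H * a = w * b) -> exists c : A, a = w * c)
  (f1 f2 : pseries A) (hf1 : restricted w f1) (hf2 : restricted w f2) :
  in_ideal1 w (XH_minus H 1) (pssub (subst_scale w f1) (subst_scale w f2)) ->
  in_ideal1 w (XH_minus H w) (pssub f1 f2).
Proof.
move=> [g [hg eg]]; set a := pssub f1 f2.
have coef0 : a 0%N = - g 0%N.
  move/(congr1 (fun F => F 0%N)): eg.
  by rewrite psmul_XH_minus0 /pssub /subst_scale !expr0 !mulr1 mulN1r.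
have coefS m : w ^+ m.+1 * a m.+1 = H * g m - g m.+1.
  move/(congr1 (fun F => F m.+1)): eg.
  rewrite psmul_XH_minusS /pssub /subst_scale -mulrBl mulrC mulN1r.
  by rewrite [- g _ + _]addrC.
have g_dvd n : wdvd w n.+1 (g n).
  apply: (wdvd_descent hw hH hg) => m le_nm.
  by rewrite -coefS; apply: wdvd_expM.
have [h eh] := ClassicalEpsilon.choice _ g_dvd.
have rec m : a m.+1 = - w * h m.+1 + H * h m.
  apply: (lregX (n := m.+1) (lreg_w hw)).
  by rewrite coefS !eh !exprS; ring.
exists h; split.
  exact: (restricted_of_recurrence hw hH (restricted_sub hf1 hf2) rec).
apply: functional_extensionality => -[|m].
  by rewrite psmul_XH_minus0 -/a coef0 eh expr1 mulNr.
by rewrite psmul_XH_minusS -/a rec.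
Qed.
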